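(* In the genomic PCR model with amplification probabilities $p_g,p_{g_d},p_h,p_{h_d}\in[0,1]$ and $p_a,p_{a_d}\in(0,1]$, started from a single genomic strand pair $(g,g_d)$, let $r=\sqrt{p_ap_{a_d}}$. Then the expected number of dye-tagged amplicons $a_d$ after $n\ge0$ cycles is $$\frac{p_gp_{h_d}}{p_ap_{a_d}}\left(\sqrt{\frac{p_a}{p_{a_d}}}\,\frac{(1+r)^n-(1-r)^n}{2}-np_a\right)+\frac{p_{g_d}p_h}{p_ap_{a_d}}\left(\frac{(1+r)^n+(1-r)^n}{2}-1\right).$$ In particular, if all six amplification probabilities equal $p\in(0,1]$, the expected number is $(1+p)^n-np-1$.
   Context: The genomic PCR model is a multi-type discrete-time branching process with six strand types $g,g_d,h,h_d,a,a_d$; all strands persist forever. In each cycle, independently, each existing strand produces one new strand with a type-specific probability (and otherwise nothing): a $g$ strand produces an $h_d$ strand with probability $p_g$; a $g_d$ strand produces an $h$ strand with probability $p_{g_d}$; an $h$ strand produces an $a_d$ strand with probability $p_h$; an $h_d$ strand produces an $a$ strand with probability $p_{h_d}$; an $a$ strand produces an $a_d$ strand with probability $p_a$; an $a_d$ strand produces an $a$ strand with probability $p_{a_d}$. The process is started from exactly one $g$ and one $g_d$ strand and no other strands. Strands of type $a_d$ are called dye-tagged amplicons. *)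

From Stdlib Require Import Reals List.
Open Scope R_scope.

(** All strands persist forever; in each cycle every
    existing strand independently produces one new strand of a prescribed type
    with a type-specific probability.  Since strands of the same type behave
    identically and independently, the number of new strands produced in one
    cycle by the [k] strands of a given type is Binomial(k, p_type), and these
    six binomial counts are independent.  We therefore represent the process by
    the (exact, finitely supported) law of its vector of strand counts. *)

Record state := mkState {
  n_g : nat; n_gd : nat; n_h : nat; n_hd : nat; n_a : nat; n_ad : nat }.

Definition fdist (A : Type) := list (R * A).

Definition fret {A : Type} (x : A) : fdist A := (1, x) :: nil.

Definition fbind {A B : Type} (d : fdist A) (f : A -> fdist B) : fdist B :=
  flat_map (fun wx => map (fun vy => (fst wx * fst vy, snd vy)) (f (snd wx))) d.

Definition binom (p : R) (m : nat) : fdist nat :=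
  map (fun k => (C m k * p ^ k * (1 - p) ^ (m - k), k)) (seq 0 (S m)).

(** One PCR cycle from state [s]:
    g -> h_d (p_g), g_d -> h (p_gd), h -> a_d (p_h), h_d -> a (p_hd),
    a -> a_d (p_a), a_d -> a (p_ad). *)
Definition pcr_step (pg pgd ph phd pa pad : R) (s : state) : fdist state :=
  fbind (binom pg  (n_g s))  (fun x1 =>
  fbind (binom pgd (n_gd s)) (fun x2 =>
  fbind (binom ph  (n_h s))  (fun x3 =>
  fbind (binom phd (n_hd s)) (fun x4 =>
  fbind (binom pa  (n_a s))  (fun x5 =>
  fbind (binom pad (n_ad s)) (fun x6 =>
  fret (mkState (n_g s) (n_gd s) (n_h s + x2)%nat (n_hd s + x1)%nat
                (n_a s + x4 + x6)%nat (n_ad s + x3 + x5)%nat))))))).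

Definition pcr_init : state := mkState 1 1 0 0 0 0.

Fixpoint pcr_law (pg pgd ph phd pa pad : R) (n : nat) : fdist state :=
  match n with
  | O => fret pcr_init
  | S n' => fbind (pcr_law pg pgd ph phd pa pad n') (pcr_step pg pgd ph phd pa pad)
  end.

Definition fexpect {A : Type} (d : fdist A) (f : A -> R) : R :=
  fold_right (fun wx acc => fst wx * f (snd wx) + acc) 0 d.

Definition expected_ad (pg pgd ph phd pa pad : R) (n : nat) : R :=
  fexpect (pcr_law pg pgd ph phd pa pad n) (fun s => INR (n_ad s)).

From Stdlib Require Import Reals List Lra Lia Factorial.
Open Scope R_scope.

(* One cycle transports expectations of linear forms in the strand counts
   exactly: each count gains in mean p times the count of its source type.
   Hence the g and g_d means stay 1, the h and h_d means grow linearly, and the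
   a and a_d means satisfy a coupled linear recurrence with linear forcing.
   Writing p_a = u r and p_ad = r / u with r = sqrt (p_a p_ad), that recurrence
   is solved by the even and odd parts in r of (1 + r)^n. *)

Lemma fexpect_app {A} (d1 d2 : fdist A) f :
  fexpect (d1 ++ d2) f = fexpect d1 f + fexpect d2 f.
Proof. induction d1 as [|[w x] d IH]; simpl; [|rewrite IH]; ring. Qed.

Lemma fexpect_scale_weights {A} w (d : fdist A) f :
  fexpect (map (fun vy => (w * fst vy, snd vy)) d) f = w * fexpect d f.
Proof. induction d as [|[w' x] d IH]; simpl; [|rewrite IH]; ring. Qed.

Lemma fexpect_bind {A B} (d : fdist A) (k : A -> fdist B) g :
  fexpect (fbind d k) g = fexpect d (fun x => fexpect (k x) g).
Proof.
  induction d as [|[w x] d IH]; simpl; [ring|].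
  unfold fbind in *; simpl. rewrite fexpect_app, fexpect_scale_weights, IH. ring.
Qed.

Lemma fexpect_ext {A} (d : fdist A) f g :
  (forall x, f x = g x) -> fexpect d f = fexpect d g.
Proof. intro Hfg. induction d as [|[w x] d IH]; simpl; [|rewrite IH, Hfg]; ring. Qed.

Lemma fexpect_plus {A} (d : fdist A) f g :
  fexpect d (fun x => f x + g x) = fexpect d f + fexpect d g.
Proof. induction d as [|[w x] d IH]; simpl; [|rewrite IH]; ring. Qed.

Lemma fexpect_scal {A} (d : fdist A) c f :
  fexpect d (fun x => c * f x) = c * fexpect d f.
Proof. induction d as [|[w x] d IH]; simpl; [|rewrite IH]; ring. Qed.

Lemma fexpect_const {A} (d : fdist A) c :
  fexpect d (fun _ => c) = c * fexpect d (fun _ => 1).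
Proof. induction d as [|[w x] d IH]; simpl; [|rewrite IH]; ring. Qed.

Lemma fexpect_map_seq (w f : nat -> R) m :
  fexpect (map (fun k => (w k, k)) (seq 0 (S m))) f = sum_f_R0 (fun k => w k * f k) m.
Proof.
  induction m as [|m IH]; [simpl; ring|].
  rewrite seq_S, map_app, fexpect_app, IH. simpl. ring.
Qed.

Lemma fexpect_binom p m f :
  fexpect (binom p m) f = sum_f_R0 (fun k => C m k * p ^ k * (1 - p) ^ (m - k) * f k) m.
Proof. apply fexpect_map_seq. Qed.

Lemma binom_mass p m : fexpect (binom p m) (fun _ => 1) = 1.
Proof.
  rewrite fexpect_binom.
  rewrite (sum_eq _ (fun k => C m k * p ^ k * (1 - p) ^ (m - k))) by (intros; ring).
  rewrite <- binomial. replace (p + (1 - p)) with 1 by ring. apply pow1.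
Qed.

Lemma C_succ_mul_succ m i :
  (i <= m)%nat -> C (S m) (S i) * INR (S i) = INR (S m) * C m i.
Proof.
  intro Him. unfold C. replace (S m - S i)%nat with (m - i)%nat by lia.
  change (fact (S m)) with (S m * fact m)%nat.
  change (fact (S i)) with (S i * fact i)%nat.
  rewrite !mult_INR. field.
  repeat split; try apply INR_fact_neq_0. apply not_0_INR. lia.
Qed.

Lemma binom_mean p m : fexpect (binom p m) INR = INR m * p.
Proof.
  rewrite fexpect_binom. destruct m as [|m]; [cbn; ring|].
  rewrite (decomp_sum _ (S m)) by lia. cbn [pred].
  rewrite (sum_eq _ (fun i => C m i * p ^ i * (1 - p) ^ (m - i) * (INR (S m) * p))).
  - rewrite <- scal_sum, <- binomial. replace (p + (1 - p)) with 1 by ring.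
    rewrite pow1. cbn [INR]. ring.
  - intros i Hi. replace (S m - S i)%nat with (m - i)%nat by lia.
    replace (C (S m) (S i) * p ^ S i * (1 - p) ^ (m - i) * INR (S i))
      with (C (S m) (S i) * INR (S i) * p ^ S i * (1 - p) ^ (m - i)) by ring.
    rewrite C_succ_mul_succ by lia. cbn [pow]. ring.
Qed.

(* The constant term is written [r - b * (m p)] so that a chain of binds can be
   peeled off by supplying only the slopes [b]. *)
Lemma fexpect_bind_binom {B} p m (f : nat -> fdist B) g b r :
  (forall k, fexpect (f k) g = r - b * (INR m * p) + b * INR k) ->
  fexpect (fbind (binom p m) f) g = r.
Proof.
  intro Hf. rewrite fexpect_bind, (fexpect_ext _ _ _ Hf).
  rewrite fexpect_plus, fexpect_const, fexpect_scal, binom_mass, binom_mean. ring.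
Qed.

Definition lin_counts (c_g c_gd c_h c_hd c_a c_ad : R) (s : state) : R :=
  c_g * INR (n_g s) + c_gd * INR (n_gd s) + c_h * INR (n_h s)
  + c_hd * INR (n_hd s) + c_a * INR (n_a s) + c_ad * INR (n_ad s).

Lemma fexpect_lin_counts (d : fdist state) c_g c_gd c_h c_hd c_a c_ad :
  fexpect d (lin_counts c_g c_gd c_h c_hd c_a c_ad) =
  c_g * fexpect d (fun s => INR (n_g s)) + c_gd * fexpect d (fun s => INR (n_gd s))
  + c_h * fexpect d (fun s => INR (n_h s)) + c_hd * fexpect d (fun s => INR (n_hd s))
  + c_a * fexpect d (fun s => INR (n_a s)) + c_ad * fexpect d (fun s => INR (n_ad s)).
Proof. unfold lin_counts. rewrite !fexpect_plus, !fexpect_scal. reflexivity. Qed.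

Section Means.
Variables pg pgd ph phd pa pad : R.

Lemma pcr_step_lin_counts s c_g c_gd c_h c_hd c_a c_ad :
  fexpect (pcr_step pg pgd ph phd pa pad s) (lin_counts c_g c_gd c_h c_hd c_a c_ad) =
  lin_counts (c_g + pg * c_hd) (c_gd + pgd * c_h) (c_h + ph * c_ad)
             (c_hd + phd * c_a) (c_a + pa * c_ad) (c_ad + pad * c_a) s.
Proof.
  unfold pcr_step.
  apply (fexpect_bind_binom _ _ _ _ c_hd); intro x1.
  apply (fexpect_bind_binom _ _ _ _ c_h); intro x2.
  apply (fexpect_bind_binom _ _ _ _ c_ad); intro x3.
  apply (fexpect_bind_binom _ _ _ _ c_a); intro x4.
  apply (fexpect_bind_binom _ _ _ _ c_ad); intro x5.
  apply (fexpect_bind_binom _ _ _ _ c_a); intro x6.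
  unfold fexpect, fret, lin_counts. cbn. rewrite !plus_INR. ring.
Qed.

Definition mean (n : nat) (count : state -> nat) : R :=
  fexpect (pcr_law pg pgd ph phd pa pad n) (fun s => INR (count s)).

Lemma mean_S_lin_counts n c_g c_gd c_h c_hd c_a c_ad :
  fexpect (pcr_law pg pgd ph phd pa pad (S n)) (lin_counts c_g c_gd c_h c_hd c_a c_ad) =
  (c_g + pg * c_hd) * mean n n_g + (c_gd + pgd * c_h) * mean n n_gd
  + (c_h + ph * c_ad) * mean n n_h + (c_hd + phd * c_a) * mean n n_hd
  + (c_a + pa * c_ad) * mean n n_a + (c_ad + pad * c_a) * mean n n_ad.
Proof.
  cbn [pcr_law]. rewrite fexpect_bind.
  rewrite (fexpect_ext _ _ _ (fun s => pcr_step_lin_counts s _ _ _ _ _ _)).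
  apply fexpect_lin_counts.
Qed.

Ltac mean_S_by c :=
  unfold mean at 1; rewrite (fexpect_ext _ _ c) by (intro; unfold lin_counts; ring);
  rewrite mean_S_lin_counts; ring.

Lemma mean_g_S n : mean (S n) n_g = mean n n_g.
Proof. mean_S_by (lin_counts 1 0 0 0 0 0). Qed.

Lemma mean_gd_S n : mean (S n) n_gd = mean n n_gd.
Proof. mean_S_by (lin_counts 0 1 0 0 0 0). Qed.

Lemma mean_h_S n : mean (S n) n_h = mean n n_h + pgd * mean n n_gd.
Proof. mean_S_by (lin_counts 0 0 1 0 0 0). Qed.

Lemma mean_hd_S n : mean (S n) n_hd = mean n n_hd + pg * mean n n_g.
Proof. mean_S_by (lin_counts 0 0 0 1 0 0). Qed.

Lemma mean_a_S n : mean (S n) n_a = mean n n_a + phd * mean n n_hd + pad * mean n n_ad.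
Proof. mean_S_by (lin_counts 0 0 0 0 1 0). Qed.

Lemma mean_ad_S n : mean (S n) n_ad = mean n n_ad + ph * mean n n_h + pa * mean n n_a.
Proof. mean_S_by (lin_counts 0 0 0 0 0 1). Qed.

Lemma mean_g n : mean n n_g = 1.
Proof. induction n as [|n IH]; [unfold mean; simpl; ring | rewrite mean_g_S; exact IH]. Qed.

Lemma mean_gd n : mean n n_gd = 1.
Proof. induction n as [|n IH]; [unfold mean; simpl; ring | rewrite mean_gd_S; exact IH]. Qed.

Lemma mean_h n : mean n n_h = INR n * pgd.
Proof.
  induction n as [|n IH]; [unfold mean; simpl; ring|].
  rewrite mean_h_S, IH, mean_gd, S_INR. ring.
Qed.

Lemma mean_hd n : mean n n_hd = INR n * pg.
Proof.
  induction n as [|n IH]; [unfold mean; simpl; ring|].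
  rewrite mean_hd_S, IH, mean_g, S_INR. ring.
Qed.

Lemma mean_a_0 : mean 0 n_a = 0.
Proof. unfold mean; simpl; ring. Qed.

Lemma mean_ad_0 : mean 0 n_ad = 0.
Proof. unfold mean; simpl; ring. Qed.

End Means.

Definition even_part (r : R) (n : nat) : R := ((1 + r) ^ n + (1 - r) ^ n) / 2.
Definition odd_part (r : R) (n : nat) : R := ((1 + r) ^ n - (1 - r) ^ n) / 2.

Lemma even_part_S r n : even_part r (S n) = even_part r n + r * odd_part r n.
Proof. unfold even_part, odd_part. cbn [pow]. field. Qed.

Lemma odd_part_S r n : odd_part r (S n) = odd_part r n + r * even_part r n.
Proof. unfold even_part, odd_part. cbn [pow]. field. Qed.

Lemma coupled_recurrence_closed_form (alpha beta pa pad u r : R) (x y : nat -> R) :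
  u <> 0 -> pa = u * r -> pad = r / u -> x 0%nat = 0 -> y 0%nat = 0 ->
  (forall n, x (S n) = x n + alpha * INR n + pad * y n) ->
  (forall n, y (S n) = y n + beta * INR n + pa * x n) ->
  forall n,
    pa * pad * y n = alpha * (u * odd_part r n - INR n * pa) + beta * (even_part r n - 1) /\
    pa * pad * x n = beta * (odd_part r n / u - INR n * pad) + alpha * (even_part r n - 1).
Proof.
  intros Hu Hpa Hpad x0 y0 x_S y_S n.
  induction n as [|n [IHy IHx]].
  - rewrite x0, y0. unfold even_part, odd_part. cbn [pow INR]. split; field; exact Hu.
  - rewrite x_S, y_S, even_part_S, odd_part_S, S_INR. split.
    + replace (pa * pad * (y n + beta * INR n + pa * x n))
        with (pa * pad * y n + pa * pad * beta * INR n + pa * (pa * pad * x n)) by ring.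
      rewrite IHy, IHx. subst pa pad. field. exact Hu.
    + replace (pa * pad * (x n + alpha * INR n + pad * y n))
        with (pa * pad * x n + pa * pad * alpha * INR n + pad * (pa * pad * y n)) by ring.
      rewrite IHy, IHx. subst pa pad. field. exact Hu.
Qed.

Lemma sqrt_ratio_mul_sqrt_prod a b : 0 < a -> 0 < b -> sqrt (a / b) * sqrt (a * b) = a.
Proof.
  intros Ha Hb. rewrite sqrt_div_alt, sqrt_mult_alt by lra.
  assert (sqrt b > 0) by (apply sqrt_lt_R0, Hb).
  transitivity (sqrt a * sqrt a); [field; lra | apply sqrt_sqrt; lra].
Qed.

Lemma sqrt_prod_div_sqrt_ratio a b : 0 < a -> 0 < b -> sqrt (a * b) / sqrt (a / b) = b.
Proof.
  intros Ha Hb. rewrite sqrt_div_alt, sqrt_mult_alt by lra.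
  assert (sqrt a > 0) by (apply sqrt_lt_R0, Ha).
  assert (sqrt b > 0) by (apply sqrt_lt_R0, Hb).
  transitivity (sqrt b * sqrt b); [field; lra | apply sqrt_sqrt; lra].
Qed.

Lemma expected_ad_closed_form (pg pgd ph phd pa pad : R) (n : nat) :
  0 < pa -> 0 < pad ->
  let r := sqrt (pa * pad) in
  expected_ad pg pgd ph phd pa pad n =
    pg * phd / (pa * pad) * (sqrt (pa / pad) * odd_part r n - INR n * pa)
    + pgd * ph / (pa * pad) * (even_part r n - 1).
Proof.
  intros Hpa Hpad r. set (u := sqrt (pa / pad)).
  assert (Hu : u <> 0) by (apply Rgt_not_eq, sqrt_lt_R0, Rdiv_lt_0_compat; assumption).
  assert (pa_eq : pa = u * r) by (symmetry; apply sqrt_ratio_mul_sqrt_prod; assumption).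
  assert (pad_eq : pad = r / u) by (symmetry; apply sqrt_prod_div_sqrt_ratio; assumption).
  destruct (coupled_recurrence_closed_form (pg * phd) (pgd * ph) pa pad u r
              (fun k => mean pg pgd ph phd pa pad k n_a)
              (fun k => mean pg pgd ph phd pa pad k n_ad) Hu pa_eq pad_eq
              (mean_a_0 _ _ _ _ _ _) (mean_ad_0 _ _ _ _ _ _)) with n as [Had _].
  - intro k. rewrite mean_a_S, mean_hd. ring.
  - intro k. rewrite mean_ad_S, mean_h. ring.
  - apply (Rmult_eq_reg_l (pa * pad)); [|nra].
    change (expected_ad pg pgd ph phd pa pad n) with (mean pg pgd ph phd pa pad n n_ad).
    rewrite Had. field. lra.
Qed.

Theorem mainTheorem5 :
  (forall (pg pgd ph phd pa pad : R) (n : nat),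
     0 <= pg <= 1 -> 0 <= pgd <= 1 -> 0 <= ph <= 1 -> 0 <= phd <= 1 ->
     0 < pa <= 1 -> 0 < pad <= 1 ->
     let r := sqrt (pa * pad) in
     expected_ad pg pgd ph phd pa pad n =
       pg * phd / (pa * pad) *
         (sqrt (pa / pad) * (((1 + r) ^ n - (1 - r) ^ n) / 2) - INR n * pa)
     + pgd * ph / (pa * pad) *
         (((1 + r) ^ n + (1 - r) ^ n) / 2 - 1))
  /\
  (forall (p : R) (n : nat), 0 < p <= 1 ->
     expected_ad p p p p p p n = (1 + p) ^ n - INR n * p - 1).
Proof.
  split.
  - intros pg pgd ph phd pa pad n _ _ _ _ [Hpa _] [Hpad _].
    exact (expected_ad_closed_form pg pgd ph phd pa pad n Hpa Hpad).
  - intros p n [Hp _].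
    rewrite (expected_ad_closed_form p p p p p p n Hp Hp).
    rewrite sqrt_square by lra.
    replace (p / p) with 1 by (field; lra). rewrite sqrt_1.
    unfold even_part, odd_part. field. lra.
Qed.
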